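(* Let $d>1$ be a square-free positive integer and let $M=\mathbb{Q}(i\sqrt{d})$, where $i=\sqrt{-1}$. Let $n\geq 1$, let $\alpha_1,\ldots,\alpha_n$ be distinct non-zero real numbers, and let $\lambda_j=\lambda_{j1}+i\lambda_{j2}$ with $\lambda_{j1},\lambda_{j2}\in\mathbb{R}$ for $1\leq j\leq n$. Let $c_0>0$. Let $X,Y\in\mathbb{Z}_M$ satisfy \[ \left|\prod_{j=1}^n(X-\alpha_j Y+\lambda_j)\right|\leq c_0 . \] (a) If $d\equiv 3 \pmod 4$, write $X=x_1+x_2\frac{1+i\sqrt{d}}{2}$, $Y=y_1+y_2\frac{1+i\sqrt{d}}{2}$ with $x_1,x_2,y_1,y_2\in\mathbb{Z}$. Then \[ \left|\prod_{j=1}^n\bigl((2x_1+x_2)-\alpha_j (2y_1+y_2)+2\lambda_{j1}\bigr)\right|\leq 2^n c_0 \quad\text{and}\quad \left|\prod_{j=1}^n\Bigl(x_2-\alpha_j y_2+\frac{2}{\sqrt{d}}\lambda_{j2}\Bigr)\right|\leq \frac{2^n c_0}{\sqrt{d}^{\,n}}. \] (b) If $d\equiv 1,2 \pmod 4$, write $X=x_1+x_2 i\sqrt{d}$, $Y=y_1+y_2 i\sqrt{d}$ with $x_1,x_2,y_1,y_2\in\mathbb{Z}$. Then \[ \left|\prod_{j=1}^n(x_1-\alpha_j y_1+\lambda_{j1})\right|\leq c_0 \quad\text{and}\quad \left|\prod_{j=1}^n\Bigl(x_2-\alpha_j y_2+\frac{1}{\sqrt{d}}\lambda_{j2}\Bigr)\right|\leq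 \frac{c_0}{\sqrt{d}^{\,n}}. \]
   Context: $\mathbb{Z}_M$ denotes the ring of integers of the number field $M$, viewed as a subset of $\mathbb{C}$ via $i\sqrt{d}\in\mathbb{C}$. For $d\equiv 3\pmod 4$ an integral basis of $\mathbb{Z}_M$ is $\{1,\frac{1+i\sqrt{d}}{2}\}$, and for $d\equiv 1,2\pmod 4$ it is $\{1,i\sqrt{d}\}$, so the integers $x_1,x_2,y_1,y_2$ are uniquely determined. *)

From HB Require Import structures.
From mathcomp Require Import all_boot all_order all_algebra.
From mathcomp Require Import complex.
Set Implicit Arguments. Unset Strict Implicit. Unset Printing Implicit Defensive.
Import Order.TTheory GRing.Theory Num.Theory.
Local Open Scope ring_scope.

Definition squarefree_nat (d : nat) : Prop :=
  forall p : nat, prime p -> ~~ (p * p %| d)%N.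

Definition cR (R : rcfType) (x : R) : R[i] := Complex x 0.

Definition isqrt (R : rcfType) (d : nat) : R[i] := Complex 0 (Num.sqrt (d%:R : R)).

(* second element of the integral basis of Z_M, M = Q(i sqrt d):
   (1 + i sqrt d)/2 if d = 3 mod 4, and i sqrt d if d = 1,2 mod 4 *)
Definition omega (R : rcfType) (d : nat) : R[i] :=
  if (d %% 4 == 3)%N then (1 + isqrt R d) / 2 else isqrt R d.

Definition ZM (R : rcfType) (d : nat) (a b : int) : R[i] :=
  a%:~R + b%:~R * omega R d.

From HB Require Import structures.
From mathcomp Require Import all_boot all_order all_algebra.
From mathcomp Require Import complex.
From mathcomp Require Import ring.
Import Order.TTheory GRing.Theory Num.Theory.
Local Open Scope ring_scope.
Local Open Scope complex_scope.

(* Since |Re z| and |Im z| are at most |z|, the products over j of the real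
   parts and of the imaginary parts of X - alpha_j Y + lambda_j are both bounded
   by c0.  Written in the integral basis, each real part is 1/2 (d = 3 mod 4)
   resp. 1 (d = 1, 2 mod 4) times the j-th factor of the first product of the
   theorem, and each imaginary part is sqrt d / 2 resp. sqrt d times the j-th
   factor of the second; the n-th powers of these constants give the bounds. *)

Section ComplexParts.
Variable R : rcfType.

Lemma ler_norm_Re (z : R[i]) : `|complex.Re z|%:C <= `|z|.
Proof.
by rewrite normc_def lecR -sqrtr_sqr ler_wsqrtr // lerDl sqr_ge0.
Qed.

Lemma ler_norm_Im (z : R[i]) : `|complex.Im z|%:C <= `|z|.
Proof.
by rewrite normc_def lecR -sqrtr_sqr ler_wsqrtr // lerDr sqr_ge0.
Qed.

Lemma ler_norm_prod_Re (I : Type) (r : seq I) (z : I -> R[i]) :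
  `|\prod_(i <- r) complex.Re (z i)|%:C <= `|\prod_(i <- r) z i|.
Proof.
rewrite !normr_prod rmorph_prod; apply: ler_prod => i _.
by rewrite ler0c normr_ge0 ler_norm_Re.
Qed.

Lemma ler_norm_prod_Im (I : Type) (r : seq I) (z : I -> R[i]) :
  `|\prod_(i <- r) complex.Im (z i)|%:C <= `|\prod_(i <- r) z i|.
Proof.
rewrite !normr_prod rmorph_prod; apply: ler_prod => i _.
by rewrite ler0c normr_ge0 ler_norm_Im.
Qed.

Lemma Complex_linear_factor (p q u v a l1 l2 : R) :
  Complex p q - a%:C * Complex u v + Complex l1 l2
  = Complex (p - a * u + l1) (q - a * v + l2).
Proof. by apply/eqP; rewrite eq_complex /= !mul0r subr0 addr0; apply/andP. Qed.

Lemma int_complex (a : int) : (a%:~R : R[i]) = (a%:~R)%:C.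
Proof. by rewrite rmorph_int. Qed.

End ComplexParts.

Lemma ler_norm_prod_scaled (R : numDomainType) (I : finType) (F G : I -> R)
    (k c : R) :
  0 <= k -> (forall i, G i = k * F i) -> `|\prod_i F i| <= c ->
  `|\prod_i G i| <= k ^+ #|I| * c.
Proof.
move=> k_ge0 GE Fc; rewrite (eq_bigr _ (fun i _ => GE i)) big_split /=.
by rewrite prodr_const normrM normrX ger0_norm // ler_wpM2l ?exprn_ge0.
Qed.

Section IntegralBasis.
Variables (R : rcfType) (d : nat).

Lemma ZM_mod4_3 (a b : int) : (d %% 4 == 3)%N ->
  ZM R d a b = Complex (a%:~R + b%:~R / 2) (b%:~R * Num.sqrt d%:R / 2).
Proof.
move=> d3; rewrite /ZM /omega d3 /isqrt !int_complex.
apply/eqP; rewrite eq_complex /=; apply/andP; split; by apply/eqP; field.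
Qed.

Lemma ZM_mod4_12 (a b : int) : (d %% 4 != 3)%N ->
  ZM R d a b = Complex a%:~R (b%:~R * Num.sqrt d%:R).
Proof.
move=> d12; rewrite /ZM /omega (negbTE d12) /isqrt !int_complex.
by apply/eqP; rewrite eq_complex /=; apply/andP; split; apply/eqP; ring.
Qed.

End IntegralBasis.

Theorem theorem4 (R : rcfType) (d n : nat) (alpha lam1 lam2 : 'I_n -> R) (c0 : R)
    (x1 x2 y1 y2 : int) :
  (1 < d)%N -> squarefree_nat d -> (1 <= n)%N ->
  injective alpha -> (forall j, alpha j != 0) -> 0 < c0 ->
  `| \prod_(j < n) (ZM R d x1 x2 - cR (alpha j) * ZM R d y1 y2
                     + Complex (lam1 j) (lam2 j)) | <= cR c0 ->
  ((d %% 4 == 3)%N ->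
     `| \prod_(j < n) ((2 * x1 + x2)%:~R - alpha j * (2 * y1 + y2)%:~R
                        + 2 * lam1 j) | <= 2 ^+ n * c0
     /\ `| \prod_(j < n) (x2%:~R - alpha j * y2%:~R
                        + 2 / Num.sqrt (d%:R) * lam2 j) |
          <= 2 ^+ n * c0 / Num.sqrt (d%:R) ^+ n)
  /\
  ((d %% 4 == 1)%N || (d %% 4 == 2)%N ->
     `| \prod_(j < n) (x1%:~R - alpha j * y1%:~R + lam1 j) | <= c0
     /\ `| \prod_(j < n) (x2%:~R - alpha j * y2%:~R
                        + 1 / Num.sqrt (d%:R) * lam2 j) |
          <= c0 / Num.sqrt (d%:R) ^+ n).
Proof.
move=> d_gt1 _ _ _ _ _ bound.
pose z j := ZM R d x1 x2 - cR (alpha j) * ZM R d y1 y2 + Complex (lam1 j) (lam2 j).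
have ReP : `|\prod_(j < n) complex.Re (z j)| <= c0.
  by rewrite -lecR (le_trans (ler_norm_prod_Re _ _ _ z)).
have ImP : `|\prod_(j < n) complex.Im (z j)| <= c0.
  by rewrite -lecR (le_trans (ler_norm_prod_Im _ _ _ z)).
have sqrtd_gt0 : 0 < Num.sqrt (d%:R : R) by rewrite sqrtr_gt0 ltr0n ltnW.
have sqrtd_neq0 := lt0r_neq0 sqrtd_gt0.
split=> [d3 | d12]; split.
- rewrite -[n in 2 ^+ n]card_ord; apply: ler_norm_prod_scaled ReP => // j.
  by rewrite /z !ZM_mod4_3 // Complex_linear_factor /= !intrD !intrM; field.
- rewrite mulrAC -expr_div_n -[n in _ ^+ n]card_ord.
  apply: ler_norm_prod_scaled ImP => [|j]; first by rewrite divr_ge0 ?ltW.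
  by rewrite /z !ZM_mod4_3 // Complex_linear_factor /=; field.
- have d_neq3 : (d %% 4 != 3)%N by case/orP: d12 => /eqP ->.
  rewrite (eq_bigr (fun j => complex.Re (z j))) // => j _.
  by rewrite /z !ZM_mod4_12 // Complex_linear_factor.
- have d_neq3 : (d %% 4 != 3)%N by case/orP: d12 => /eqP ->.
  rewrite [leRHS]mulrC -exprVn -[n in _ ^+ n]card_ord.
  apply: ler_norm_prod_scaled ImP => [|j]; first by rewrite invr_ge0 ltW.
  by rewrite /z !ZM_mod4_12 // Complex_linear_factor /=; field.
Qed.
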